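(* Let $\gamma\ge0$ and $g$ be integers with $g$ sufficiently large relative to $\gamma$, and fix a set ${\rm S}_0$ arising as the residue-zero part of some semigroup in ${\rm H}(g,\gamma)$. Let $u_1, u_1'$ be integers, let ${\rm S}\in{\rm H}_{u_1}$ be such that $\#{\rm S}_{(u_1)_3}$ is maximal among all members of ${\rm H}_{u_1}$, and let ${\rm T}\in{\rm H}_{u_1'}$ be such that $\#{\rm T}_{(u_1')_3}$ is maximal among all members of ${\rm H}_{u_1'}$. If $\chi := u_1 - u_1^H < 6\gamma$ and ${\rm S}_{(u_1)_3} \subsetneq {\rm T}_{(u_1')_3}$, then $\widetilde{I}_{\rm T} < \widetilde{I}_{\rm S}$.
   Context: A numerical semigroup is a submonoid of $\mathbb{N}$ with finite complement; its genus is the size of the complement. For an integer $u$, $(u)_3$ is its residue mod 3 in $\{0,1,2\}$. For a semigroup ${\rm S}$ of genus $g$, ${\rm S}^*={\rm S}\cap\{1,\dots,2g\}$, ${\rm S}_i=\{s\in{\rm S}^*:(s)_3=i\}$, and the inflection is $\widetilde{I}_{\rm S}=\sum_{s\in{\rm S}^*}s$. A numerical semigroup is $(3,\gamma)$-hyperelliptic if its first $\gamma$ positive elements are multiples of 3 with the $\gamma$-th equal to $6\gamma$, and $3(2\gamma+1)$ belongs to it. ${\rm H}={\rm H}(g,\gamma)$ is the set of $(3,\gamma)$-hyperelliptic semigroups of genus $g$; $u_1({\rm T}) := \min\{t\in{\rm T}:(t)_3\ne0\}$; $u_1^H:=\min\{u_1({\rm T}):{\rm T}\in{\rm H}\}$.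 For the fixed set ${\rm S}_0$, ${\rm H}^{{\rm S}_0} := \{{\rm T}\in{\rm H} : {\rm T}_0={\rm S}_0\}$ and, for an integer $u$, ${\rm H}_{u} := \{{\rm T}\in{\rm H}^{{\rm S}_0} : u_1({\rm T}) = u\}$. *)

From mathcomp Require Import all_boot.
Set Implicit Arguments. Unset Strict Implicit. Unset Printing Implicit Defensive.

Definition numerical_semigroup (S : pred nat) : Prop :=
  S 0 /\ (forall a b, S a -> S b -> S (a + b)) /\ (exists c, forall n, c <= n -> S n).

(* genus = number of gaps (well defined: any c beyond which all n are in S
   gives the same count) *)
Definition has_genus (S : pred nat) (g : nat) : Prop :=
  exists c, (forall n, c <= n -> S n) /\ count (predC S) (iota 0 c) = g.

Definition Sstar (g : nat) (S : pred nat) : seq nat := [seq s <- iota 1 (2 * g) | S s].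

Definition Sres (g : nat) (S : pred nat) (i : nat) : seq nat :=
  [seq s <- Sstar g S | s %% 3 == i].

Definition inflection (g : nat) (S : pred nat) : nat := sumn (Sstar g S).

(* (3,gamma)-hyperelliptic: the first gamma positive elements are multiples of 3,
   the gamma-th being 6 gamma, and 3(2 gamma + 1) belongs to S. *)
Definition hyperelliptic3 (gamma : nat) (S : pred nat) : Prop :=
  (forall s, 1 <= s <= 6 * gamma -> S s -> 3 %| s) /\
  count S (iota 1 (6 * gamma)) = gamma /\
  S (6 * gamma) /\ S (3 * (2 * gamma + 1)).

Definition inH (g gamma : nat) (S : pred nat) : Prop :=
  numerical_semigroup S /\ has_genus S g /\ hyperelliptic3 gamma S.

Definition is_u1 (T : pred nat) (u : nat) : Prop :=
  T u /\ u %% 3 != 0 /\ (forall t, t < u -> T t -> t %% 3 = 0).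

Definition is_u1H (g gamma : nat) (u : nat) : Prop :=
  (exists T, inH g gamma T /\ is_u1 T u) /\
  (forall T v, inH g gamma T -> is_u1 T v -> u <= v).

Definition inHu (g gamma : nat) (S0 : seq nat) (u : nat) (T : pred nat) : Prop :=
  inH g gamma T /\ Sres g T 0 = S0 /\ is_u1 T u.

Definition maximal_in_Hu (g gamma : nat) (S0 : seq nat) (u : nat) (T : pred nat) : Prop :=
  inHu g gamma S0 u T /\
  (forall T', inHu g gamma S0 u T' -> size (Sres g T' (u %% 3)) <= size (Sres g T (u %% 3))).

Definition proper_subseq_set (A B : seq nat) : Prop :=
  {subset A <= B} /\ exists2 x, x \in B & x \notin A.

(* Since inflection g X + (sum of the gaps of X) = 1 + 2 + ... + 2g, it suffices
   to show that T has the larger gap sum. S and T share their multiples of 3, so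
   they differ only in how the g - c0 remaining gaps split between the classes 1
   and 2 mod 3. Every 3n with n >= K := 4 gamma^2 lies in X, so the gaps of a class
   are an initial segment r, r + 3, ... plus at most K stragglers, and a class with
   c gaps contributes about 3c^2/2. The proper inclusion S_i < T_i (i = u1 mod 3)
   says T has fewer gaps in the class i, hence more in the other class k. A
   semigroup of H whose class 1 starts near (g - c0)/3 bounds u1^H, so chi < 6 gamma
   keeps the class i of S to about a third of those gaps; for g large the class k
   of S is much fuller, and moving gaps from the emptier class to the fuller one
   raises the gap sum. *)

From mathcomp Require Import all_boot zify.
Set Implicit Arguments. Unset Strict Implicit. Unset Printing Implicit Defensive.

Fixpoint count_lt (P : pred nat) n : nat :=
  if n is n'.+1 then count_lt P n' + P n' else 0.

Fixpoint sum_lt (P : pred nat) n : nat :=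
  if n is n'.+1 then sum_lt P n' + (if P n' then n' else 0) else 0.

Definition res_class (P : pred nat) r : pred nat := fun t => P (3 * t + r).

(* The sum of the 3t + r, t < n, such that P (3t + r). *)
Definition class_weight (P : pred nat) r n : nat :=
  3 * sum_lt (res_class P r) n + r * count_lt (res_class P r) n.

Section CountLt.
Implicit Types (P Q : pred nat).

Lemma count_ltS P n : count_lt P n.+1 = count_lt P n + P n.
Proof. by []. Qed.

Lemma eq_count_lt P Q n :
  (forall i, i < n -> P i = Q i) -> count_lt P n = count_lt Q n.
Proof. by elim: n => //= n IH PQ; rewrite IH ?PQ // => i lt_in; apply: PQ; lia. Qed.

Lemma eq_sum_lt P Q n :
  (forall i, i < n -> P i = Q i) -> sum_lt P n = sum_lt Q n.
Proof. by elim: n => //= n IH PQ; rewrite IH ?PQ // => i lt_in; apply: PQ; lia. Qed.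

Lemma count_lt_max P n : count_lt P n <= n.
Proof. by elim: n => //= n IH; case: (P n) => /=; lia. Qed.

Lemma sub_count_lt P Q n :
  (forall i, i < n -> P i -> Q i) -> count_lt P n <= count_lt Q n.
Proof.
elim: n => //= n IH PQ; have := PQ n (ltnSn n).
have := IH (fun i lt_in => PQ i (ltnW lt_in)).
by case: (P n); case: (Q n) => //=; lia.
Qed.

Lemma count_lt_mono P : {homo count_lt P : a b / a <= b}.
Proof. by move=> a b /subnK <-; elim: (b - a) => //= k IH; lia. Qed.

Lemma count_lt_stable P a b :
  (forall i, a <= i -> ~~ P i) -> a <= b -> count_lt P b = count_lt P a.
Proof.
move=> Pa /subnK <-; elim: (b - a) => //= k ->.
by rewrite (negbTE (Pa _ (leq_addl _ _))) addn0.
Qed.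

Lemma sum_lt_stable P a b :
  (forall i, a <= i -> ~~ P i) -> a <= b -> sum_lt P b = sum_lt P a.
Proof.
move=> Pa /subnK <-; elim: (b - a) => //= k ->.
by rewrite (negbTE (Pa _ (leq_addl _ _))) addn0.
Qed.

Lemma count_lt_bound P a n : (forall i, a <= i -> ~~ P i) -> count_lt P n <= a.
Proof.
move=> Pa; case: (leqP n a) => [le_na | /ltnW le_an].
  exact: leq_trans (count_lt_max P n) le_na.
by rewrite (count_lt_stable Pa le_an) count_lt_max.
Qed.

Lemma count_lt_predC P n : count_lt P n + count_lt (predC P) n = n.
Proof. by elim: n => //= n IH; case: (P n) => /=; lia. Qed.

Lemma sum_lt_predC P n : sum_lt P n + sum_lt (predC P) n = sum_lt predT n.
Proof. by elim: n => //= n IH; case: (P n) => /=; lia. Qed.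

Lemma count_lt_gtn a n : count_lt (gtn a) n = minn a n.
Proof. by elim: n => //= n ->; case: (ltnP n a) => /=; lia. Qed.

Lemma count_lt_shift P n : count_lt P n.+1 = P 0 + count_lt (fun i => P i.+1) n.
Proof. by elim: n => /= [|n]; lia. Qed.

Lemma count_lt_rev P n : count_lt (fun i => P (n - i)) n.+1 = count_lt P n.+1.
Proof.
elim: n P => // n IH P; rewrite count_ltS subnn.
have -> : count_lt (fun i => P (n.+1 - i)) n.+1 = count_lt (fun i => P (n - i).+1) n.+1.
  by apply: eq_count_lt => i lt_in; congr P; lia.
by rewrite (IH (fun i => P i.+1)) [RHS]count_lt_shift addnC.
Qed.

Lemma count_iota0 P n : count P (iota 0 n) = count_lt P n.
Proof. by elim: n => // n IH; rewrite -addn1 iotaD count_cat IH /= add0n addn1 addn0. Qed.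

Lemma sumn_filter_iota0 P n : sumn [seq i <- iota 0 n | P i] = sum_lt P n.
Proof.
elim: n => // n IH; rewrite -addn1 iotaD filter_cat sumn_cat IH /= add0n addn1 /=.
by case: (P n) => /=; lia.
Qed.

Lemma count_lt_mul3 P n :
  count_lt P (3 * n) =
  count_lt (res_class P 0) n + count_lt (res_class P 1) n + count_lt (res_class P 2) n.
Proof.
elim: n => // n IH; have -> : 3 * n.+1 = (3 * n).+3 by lia.
by rewrite /= IH /res_class addn0 addn1 addn2; lia.
Qed.

Lemma sum_lt_mul3 P n :
  sum_lt P (3 * n) = class_weight P 0 n + class_weight P 1 n + class_weight P 2 n.
Proof.
elim: n => // n IH; have -> : 3 * n.+1 = (3 * n).+3 by lia.
move: IH; rewrite /class_weight /= /res_class !addn0 !addn1 !addn2.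
by case: (P (3 * n)); case: (P (3 * n).+1); case: (P (3 * n).+2) => /=; lia.
Qed.

Lemma count_lt_res_class P r n : r < 3 ->
  count_lt (fun i => P i && (i %% 3 == r)) (3 * n) = count_lt (res_class P r) n.
Proof.
move=> lt_r3; elim: n => // n IH; have -> : 3 * n.+1 = (3 * n).+3 by lia.
rewrite /= IH /res_class.
have -> : (3 * n) %% 3 = 0 by lia.
have -> : (3 * n).+1 %% 3 = 1 by lia.
have -> : (3 * n).+2 %% 3 = 2 by lia.
by case: r lt_r3 {IH} => [|[|[|]]] // _; rewrite ?addn0 ?addn1 ?addn2 /= ?andbT ?andbF; lia.
Qed.

Lemma triangular_le_sum_lt P n :
  count_lt P n * count_lt P n <= 2 * sum_lt P n + count_lt P n.
Proof. by elim: n => //= n IH; have := count_lt_max P n; case: (P n) => /=; nia. Qed.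

Lemma sum_lt_le_triangular P m k n :
  (forall i, i < m -> P i) -> (forall i, m + k <= i -> ~~ P i) ->
  2 * sum_lt P n + count_lt P n <= count_lt P n * count_lt P n + 2 * (k * k).
Proof.
move=> Pm Pmk.
have c_ge j : minn m j <= count_lt P j.
  by rewrite -count_lt_gtn; apply: sub_count_lt => i _ /Pm.
have bound j : 2 * sum_lt P j + count_lt P j
               <= count_lt P j * count_lt P j + 2 * k * (count_lt P j - m).
  elim: j => //= j IH; have := c_ge j.
  case Pj: (P j) => /=; last by lia.
  have : j < m + k by case: ltnP => // /Pmk; rewrite Pj.
  by nia.
by have := bound n; have := count_lt_bound n Pmk; nia.
Qed.

End CountLt.

Lemma semigroup_muln X x k : numerical_semigroup X -> X x -> X (k * x).
Proof.
move=> [X0 [X_add _]] Xx; elim: k => [|k IH]; first by rewrite mul0n.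
by rewrite mulSn; apply: X_add.
Qed.

Section Genus.
Variables (X : pred nat) (g : nat).
Hypotheses (X_ns : numerical_semigroup X) (X_genus : has_genus X g).

Lemma gaps_below n : count_lt (predC X) n <= g.
Proof.
have [c [Xc <-]] := X_genus; rewrite count_iota0.
apply: leq_trans (count_lt_mono _ (leq_maxl n c)) _.
by rewrite (count_lt_stable (a := c)) ?leq_maxr // => i /Xc /= ->.
Qed.

(* Of n - i and i, at most one lies in X when n is a gap. *)
Lemma conductor_le n : 2 * g <= n -> X n.
Proof.
move=> le_2g_n; apply: contraT => Xn.
have [_ [X_add _]] := X_ns.
have : count_lt X n.+1 <= count_lt (fun i => predC X (n - i)) n.+1.
  apply: sub_count_lt => i lt_in Xi /=; apply: contra Xn => Xni.
  by have := X_add _ _ Xi Xni; rewrite subnKC // -ltnS.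
rewrite count_lt_rev; have := count_lt_predC X n.+1; have := gaps_below n.+1.
lia.
Qed.

Lemma gaps_count n : 2 * g <= n -> count_lt (predC X) n = g.
Proof.
have [c [Xc gaps_c]] := X_genus.
have X_ge i : 2 * g <= i -> ~~ predC X i by move=> /conductor_le /= ->.
move=> le_2g_n; rewrite (count_lt_stable X_ge le_2g_n).
rewrite -(count_lt_stable X_ge (leq_maxl _ c)) (count_lt_stable (a := c)) ?leq_maxr //.
  by rewrite -count_iota0.
by move=> i /Xc /= ->.
Qed.

Lemma gap_classes_total :
  count_lt (res_class (predC X) 0) g + count_lt (res_class (predC X) 1) g
  + count_lt (res_class (predC X) 2) g = g.
Proof. by rewrite -count_lt_mul3 gaps_count //; lia. Qed.

Lemma inflection_add_gaps :
  inflection g X + sum_lt (predC X) (3 * g) = sum_lt predT (2 * g).+1.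
Proof.
have X_ge i : 2 * g <= i -> ~~ predC X i by move=> /conductor_le /= ->.
have -> : inflection g X = sum_lt X (2 * g).+1.
  by rewrite -sumn_filter_iota0 /inflection /Sstar /=; case: (X 0).
rewrite (sum_lt_stable X_ge (_ : 2 * g <= 3 * g)); last lia.
by rewrite -(sum_lt_stable X_ge (leqnSn _)) sum_lt_predC.
Qed.

Lemma size_Sres r : 0 < r < 3 ->
  size (Sres g X r) + count_lt (res_class (predC X) r) g
  = count (fun n => n %% 3 == r) (iota 1 (2 * g)).
Proof.
move=> /andP [r_gt0 lt_r3].
have X_ge i : 2 * g <= i -> ~~ (predC X i && (i %% 3 == r)).
  by move=> /conductor_le /= ->.
rewrite -count_lt_res_class // (count_lt_stable X_ge (_ : 2 * g <= 3 * g)); last lia.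
rewrite -(count_lt_stable X_ge (leqnSn _)) -count_iota0 /= mod0n.
rewrite eq_sym (negbTE (lt0n_neq0 r_gt0)) /Sres /Sstar size_filter count_filter.
rewrite andbF add0n; elim: (iota 1 (2 * g)) => //= n s.
by case: (X n); case: (n %% 3 == r) => /=; lia.
Qed.

End Genus.

Lemma mem_Sres g X r x :
  (x \in Sres g X r) = [&& x %% 3 == r, X x & 0 < x <= 2 * g].
Proof.
rewrite /Sres /Sstar !mem_filter mem_iota add1n ltnS.
by case: (x %% 3 == r); case: (X x).
Qed.

Lemma Sres_uniq g X r : uniq (Sres g X r).
Proof. by rewrite !filter_uniq // iota_uniq. Qed.

Lemma proper_subseq_set_size (A B : seq nat) :
  uniq A -> proper_subseq_set A B -> size A < size B.
Proof.
move=> A_uniq [AB [x xB xA]].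
have := @uniq_leq_size _ (x :: A) B; rewrite /= xA A_uniq; apply=> // y.
by rewrite inE => /predU1P [-> | /AB].
Qed.

Definition cut_classes (S : pred nat) a b : pred nat := fun n =>
  if n %% 3 == 0 then S n else if n %% 3 == 1 then 3 * a + 1 <= n else 3 * b + 2 <= n.

Lemma cut_classes_ns S a b : numerical_semigroup S -> a <= b <= 2 * a ->
  (forall n, a + b < n -> S (3 * n)) -> numerical_semigroup (cut_classes S a b).
Proof.
move=> [S0 [S_add [c Sc]]] /andP [le_ab le_b2a] S3.
split; first by rewrite /cut_classes mod0n.
split; last first.
  exists (c + 3 * a + 3 * b + 3) => n le_n; rewrite /cut_classes.
  by case: ifP => _; [apply: Sc | case: ifP => _]; lia.
move=> x y; rewrite /cut_classes -[(x + y) %% 3]modnDm.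
have [x_r|[x_r|x_r]] : x %% 3 = 0 \/ x %% 3 = 1 \/ x %% 3 = 2 by lia.
all: have [y_r|[y_r|y_r]] : y %% 3 = 0 \/ y %% 3 = 1 \/ y %% 3 = 2 by lia.
all: rewrite x_r y_r /= => Sx Sy; first [exact: S_add | lia | idtac].
all: have -> : x + y = 3 * ((x + y) %/ 3) by lia.
all: by apply: S3; lia.
Qed.

Lemma cut_classes_genus S g a b : numerical_semigroup S -> has_genus S g ->
  has_genus (cut_classes S a b) (count_lt (res_class (predC S) 0) g + a + b).
Proof.
move=> S_ns S_genus; have S_ge := conductor_le S_ns S_genus.
set M := g + a + b + 1; exists (3 * M); split.
  move=> n le_n; rewrite /cut_classes.
  by case: ifP => _; [apply: S_ge | case: ifP => _]; lia.
rewrite count_iota0 count_lt_mul3.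
have -> : count_lt (res_class (predC (cut_classes S a b)) 0) M
          = count_lt (res_class (predC S) 0) g.
  rewrite (@eq_count_lt _ (res_class (predC S) 0)) => [|t _]; last first.
    by rewrite /res_class /cut_classes /= addn0 modnMr.
  apply: count_lt_stable; last lia.
  by move=> t le_gt; rewrite /res_class /= negbK S_ge //; lia.
have class_lt r c : 0 < r < 3 -> c < M ->
    (forall t, res_class (predC (cut_classes S a b)) r t = (3 * t + r < 3 * c + r)) ->
    count_lt (res_class (predC (cut_classes S a b)) r) M = c.
  move=> r_bd lt_cM class_r.
  rewrite (@eq_count_lt _ (gtn c)) ?count_lt_gtn => [|t _]; first lia.
  by rewrite class_r ltn_add2r ltn_mul2l.
rewrite (class_lt 1 a) ?(class_lt 2 b) //; try lia.
  move=> t; rewrite /res_class /cut_classes /=.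
  by rewrite (_ : (3 * t + 2) %% 3 = 2) ?ltnNge //; lia.
move=> t; rewrite /res_class /cut_classes /=.
by rewrite (_ : (3 * t + 1) %% 3 = 1) ?ltnNge //; lia.
Qed.

Lemma cut_classes_u1 S a b : a <= b -> is_u1 (cut_classes S a b) (3 * a + 1).
Proof.
rewrite /is_u1 /cut_classes => le_ab; have -> : (3 * a + 1) %% 3 = 1 by lia.
split; first by rewrite /= leqnn.
split=> // t lt_t.
have [t_r|[t_r|t_r]] : t %% 3 = 0 \/ t %% 3 = 1 \/ t %% 3 = 2 by lia.
all: by rewrite t_r //=; lia.
Qed.

Lemma cut_classes_hyper gam S a b : hyperelliptic3 gam S -> 2 * gam <= a <= b ->
  hyperelliptic3 gam (cut_classes S a b).
Proof.
move=> [S_mul3 [S_count [S6 S7]]] /andP [le_a le_ab].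
have cut_S s : s <= 6 * gam -> cut_classes S a b s = S s.
  rewrite /cut_classes => le_s; case: ifP => // s_r.
  have s_pos : 0 < s by case: s s_r {le_s}.
  have /negbTE -> : ~~ S s.
    by apply: contraFN s_r => Ss; apply: S_mul3; rewrite ?s_pos.
  by case: ifP => _; apply/negbTE; rewrite -ltnNge; lia.
split.
  by move=> s /andP [s_pos le_s]; rewrite cut_S // => Ss; apply: S_mul3; rewrite ?s_pos.
split.
  apply: etrans S_count; apply: eq_in_count => s.
  by rewrite mem_iota => lt_s; apply: cut_S; lia.
by rewrite cut_S // /cut_classes modnMr.
Qed.

Lemma Sres0_mul3_eq g S T :
  numerical_semigroup S -> has_genus S g -> numerical_semigroup T -> has_genus T g ->
  Sres g S 0 = Sres g T 0 -> forall t, S (3 * t) = T (3 * t).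
Proof.
move=> S_ns S_genus T_ns T_genus ST t.
case: (posnP t) => [-> | t_pos]; first by have [-> _] := S_ns; have [-> _] := T_ns.
case: (leqP (3 * t) (2 * g)) => [le_t | /ltnW lt_t]; last first.
  by rewrite !(conductor_le S_ns S_genus, conductor_le T_ns T_genus).
have := mem_Sres g S 0 (3 * t); rewrite ST mem_Sres modnMr eqxx /=.
by rewrite (_ : 0 < 3 * t <= 2 * g) ?andbT //; apply/andP; lia.
Qed.

Lemma proper_Sres_gaps_lt g S T r r' x :
  numerical_semigroup S -> has_genus S g -> numerical_semigroup T -> has_genus T g ->
  0 < r < 3 -> x \in Sres g S r -> proper_subseq_set (Sres g S r) (Sres g T r') ->
  count_lt (res_class (predC T) r) g < count_lt (res_class (predC S) r) g.
Proof.
move=> S_ns S_genus T_ns T_genus r_bd xS ST.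
have r'_r : r' = r.
  have [/(_ x xS)] := ST; move: xS; rewrite !mem_Sres.
  by case/and3P => /eqP <- _ _ /and3P [/eqP <-].
move: ST; rewrite r'_r => /(proper_subseq_set_size (Sres_uniq g S r)).
by have := size_Sres S_ns S_genus r_bd; have := size_Sres T_ns T_genus r_bd; lia.
Qed.

(* Moving [a - a'] gaps from the emptier residue class to the fuller one, whose
   gaps sit higher, increases the weighted gap sum. *)
Lemma gap_transfer_weight_lt (i k a b a' b' z1 z2 z1' z2' e : nat) :
  0 < i -> 0 < k -> i + k = 3 -> a + b = a' + b' -> a' < a -> a + e + 1 <= b ->
  a' * a' <= 2 * z1' + a' -> b' * b' <= 2 * z2' + b' ->
  2 * z1 + a <= a * a + e -> 2 * z2 + b <= b * b + e ->
  3 * z1 + i * a + (3 * z2 + k * b) < 3 * z1' + i * a' + (3 * z2' + k * b').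
Proof.
move=> i_gt0 k_gt0 ik_eq ab_eq lt_a le_b low1 low2 up1 up2.
have [d a_def] : exists d, a = a' + d.+1 by exists (a - a'.+1); lia.
have [f b_def] : exists f, b = a' + e + f + 2 by exists (b - a' - e - 2); lia.
have b'_def : b' = b + d.+1 by lia.
subst a b b'; have [[-> ->] | [-> ->]] : i = 1 /\ k = 2 \/ i = 2 /\ k = 1 by lia.
all: nia.
Qed.

Section Hyperelliptic.
Variable gam : nat.
Hypothesis gam_gt0 : 0 < gam.
Local Notation K := (4 * gam * gam).

(* 3n is a combination of 6 gam and 3 (2 gam + 1) as soon as n >= (2 gam)^2. *)
Lemma hyper_mul3 X : numerical_semigroup X -> hyperelliptic3 gam X ->
  forall n, K <= n -> X (3 * n).
Proof.
move=> X_ns [_ [_ [X6 X7]]] n le_Kn; have [_ [X_add _]] := X_ns.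
have := divn_eq n (2 * gam); set q := n %/ _; set r := n %% _ => def_n.
have lt_r : r < 2 * gam by rewrite ltn_mod; lia.
have le_rq : r <= q by case: (leqP r q) => //; nia.
have -> : 3 * n = (q - r) * (6 * gam) + r * (3 * (2 * gam + 1)) by nia.
by apply: X_add; apply: semigroup_muln.
Qed.

Lemma res_class_closed X r m t : numerical_semigroup X -> hyperelliptic3 gam X ->
  X (3 * m + r) -> m + K <= t -> X (3 * t + r).
Proof.
move=> X_ns X_hyp Xm le_mt; have [_ [X_add _]] := X_ns.
have -> : 3 * t + r = 3 * m + r + 3 * (t - m) by lia.
by apply: X_add => //; apply: (hyper_mul3 X_ns X_hyp); lia.
Qed.

Lemma gap_class_count_le X r m n : numerical_semigroup X -> hyperelliptic3 gam X ->
  X (3 * m + r) -> count_lt (res_class (predC X) r) n <= m + K.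
Proof.
move=> X_ns X_hyp Xm; apply: count_lt_bound => t le_t /=; rewrite negbK.
exact: res_class_closed Xm le_t.
Qed.

(* The gaps of a residue class are an initial segment followed by at most K gaps. *)
Lemma gap_class_sum_le g X r : inH g gam X ->
  2 * sum_lt (res_class (predC X) r) g + count_lt (res_class (predC X) r) g
  <= count_lt (res_class (predC X) r) g * count_lt (res_class (predC X) r) g
     + 2 * (K * K).
Proof.
move=> [X_ns [X_genus X_hyp]].
have ex_m : exists m, X (3 * m + r) by exists g; apply: (conductor_le X_ns X_genus); lia.
case: (ex_minnP ex_m) => m Xm m_min; apply: (sum_lt_le_triangular (m := m)) => t.
  by move=> lt_tm /=; apply: contraL lt_tm => /m_min; rewrite -leqNgt.
by move=> /(res_class_closed X_ns X_hyp Xm); rewrite /res_class /= => ->.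
Qed.

(* Witness: cut_classes S a b with a + b = g - c0 and a about (g - c0)/3. *)
Lemma u1H_le g S uH : inH g gam S ->
  (forall T v, inH g gam T -> is_u1 T v -> uH <= v) -> 2 * K + 6 * gam <= g ->
  uH + count_lt (res_class (predC S) 0) g <= g + 3.
Proof.
move=> [S_ns [S_genus S_hyp]] uH_min le_g.
set c0 := count_lt _ g.
have c0_le : c0 <= K by have [S0 _] := S_ns; apply: (@gap_class_count_le S 0 0).
set a := (g - c0 + 2) %/ 3; set b := g - c0 - a.
have le_ab : a <= b <= 2 * a by apply/andP; lia.
suff : uH <= 3 * a + 1 by lia.
apply: (uH_min (cut_classes S a b)); last by apply: cut_classes_u1; lia.
split; first by apply: cut_classes_ns => // n lt_n; apply: (hyper_mul3 S_ns S_hyp); lia.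
split; last by apply: cut_classes_hyper => //; apply/andP; lia.
by rewrite (_ : g = c0 + a + b); [apply: cut_classes_genus | lia].
Qed.

Lemma gap_imbalance g S u k : inH g gam S -> is_u1 S u -> u %% 3 + k = 3 ->
  u + count_lt (res_class (predC S) 0) g < g + 3 + 6 * gam ->
  6 * (K * K) + 7 * K + 12 * gam + 9 <= g ->
  count_lt (res_class (predC S) (u %% 3)) g + 2 * (K * K) + 1
  <= count_lt (res_class (predC S) k) g.
Proof.
move=> [S_ns [S_genus S_hyp]] [Su [u_r _]] ik_eq le_u le_g.
have c0_le : count_lt (res_class (predC S) 0) g <= K.
  by have [S0 _] := S_ns; apply: (@gap_class_count_le S 0 0).
have ci_le : count_lt (res_class (predC S) (u %% 3)) g <= u %/ 3 + K.
  by apply: (@gap_class_count_le S (u %% 3) (u %/ 3)) => //; rewrite mulnC -divn_eq.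
have := gap_classes_total S_ns S_genus.
have [[i_eq ->] | [i_eq ->]] : u %% 3 = 1 /\ k = 2 \/ u %% 3 = 2 /\ k = 1 by lia.
all: by move: ci_le; rewrite i_eq; lia.
Qed.

Lemma inflection_lt_of_gap_transfer g S T i k : inH g gam S -> inH g gam T ->
  0 < i -> 0 < k -> i + k = 3 ->
  (forall t, S (3 * t) = T (3 * t)) ->
  count_lt (res_class (predC T) i) g < count_lt (res_class (predC S) i) g ->
  count_lt (res_class (predC S) i) g + 2 * (K * K) + 1
  <= count_lt (res_class (predC S) k) g ->
  inflection g T < inflection g S.
Proof.
move=> S_H T_H i_gt0 k_gt0 ik_eq ST_mul3 lt_ci le_ck.
have [S_ns [S_genus _]] := S_H; have [T_ns [T_genus _]] := T_H.
have class0 t : res_class (predC T) 0 t = res_class (predC S) 0 t.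
  by rewrite /res_class /= addn0 ST_mul3.
have c0_eq : count_lt (res_class (predC T) 0) g = count_lt (res_class (predC S) 0) g.
  by apply: eq_count_lt => t _.
have z0_eq : sum_lt (res_class (predC T) 0) g = sum_lt (res_class (predC S) 0) g.
  by apply: eq_sum_lt => t _.
have := gap_transfer_weight_lt i_gt0 k_gt0 ik_eq _ lt_ci le_ck
  (triangular_le_sum_lt (res_class (predC T) i) g)
  (triangular_le_sum_lt (res_class (predC T) k) g)
  (gap_class_sum_le i S_H) (gap_class_sum_le k S_H).
have := gap_classes_total S_ns S_genus; have := gap_classes_total T_ns T_genus.
have := inflection_add_gaps S_ns S_genus; have := inflection_add_gaps T_ns T_genus.
rewrite !sum_lt_mul3 /class_weight c0_eq z0_eq.
have [[-> ->] | [-> ->]] : i = 1 /\ k = 2 \/ i = 2 /\ k = 1 by lia.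
all: lia.
Qed.

End Hyperelliptic.

Theorem lemma2p5 :
  forall gamma : nat, exists N : nat, forall g : nat, N <= g ->
  forall (S0 : seq nat),
    (exists S', inH g gamma S' /\ Sres g S' 0 = S0) ->
  forall (u1 u1' uH : nat) (S T : pred nat),
    is_u1H g gamma uH ->
    maximal_in_Hu g gamma S0 u1 S ->
    maximal_in_Hu g gamma S0 u1' T ->
    u1 - uH < 6 * gamma ->
    proper_subseq_set (Sres g S (u1 %% 3)) (Sres g T (u1' %% 3)) ->
    inflection g T < inflection g S.
Proof.
move=> gam; set K := 4 * gam * gam.
exists (6 * (K * K) + 7 * K + 12 * gam + 9) => g le_g S0 _ u1 u1' uH S T
  [_ uH_min] [[S_H [S0_S u1_S]] _] [[T_H [S0_T _]] _] chi ST.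
have gam_gt0 : 0 < gam by lia.
have [[S_ns [S_genus _]] [T_ns [T_genus _]]] := (S_H, T_H).
have uH_le : uH + count_lt (res_class (predC S) 0) g <= g + 3.
  by apply: (u1H_le gam_gt0 S_H uH_min); lia.
have [S_u1 [u1_r _]] := u1_S.
have i_bd : 0 < u1 %% 3 < 3 by rewrite lt0n u1_r ltn_mod.
apply: (@inflection_lt_of_gap_transfer _ gam_gt0 g S T (u1 %% 3) (3 - u1 %% 3) S_H T_H);
  try lia.
- by apply: (Sres0_mul3_eq S_ns S_genus T_ns T_genus); rewrite S0_S S0_T.
- apply: (proper_Sres_gaps_lt (x := u1) S_ns S_genus T_ns T_genus i_bd _ ST).
  by rewrite mem_Sres eqxx S_u1 /=; apply/andP; lia.
- by apply: gap_imbalance => //; lia.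
Qed.
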